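(* Consider the lattice Boltzmann scheme described in the context under acoustic scaling, with a prepared initialisation $w_i=\sum_{\mathfrak{e}}w_{i,\mathfrak{e}}x^{\mathfrak{e}}$ (finitely supported coefficients) satisfying $$\sum_{\mathfrak{e}}w_{1,\mathfrak{e}}=1,\qquad \sum_{\mathfrak{e}}w_{1,\mathfrak{e}}\mathfrak{e}^{\mathfrak{n}}=0\ \text{ for every } |\mathfrak{n}|=1,$$ and, for every $r\in\{2,\dots,q\}$ with $\mathcal{G}_{1r}\neq0$, $\sum_{\mathfrak{e}}w_{r,\mathfrak{e}}=\epsilon_r$. Then for every $n\in\mathbb{N}^*$ the modified equation of the $n$-th starting scheme reads $\partial_t\phi(0,x)+\lambda(\mathcal{G}_{11}+\sum_{r=2}^q\mathcal{G}_{1r}\epsilon_r)\phi(0,x)=O(\Delta x)$, i.e. the starting schemes are consistent with the modified equation of the bulk finite difference scheme at order $O(\Delta x)$. Moreover the initial datum $m_1(0,\cdot)=w_1m_1^\circ$ is consistent with the initial datum of the Cauchy problem up to order $O(\Delta x^2)$, i.e. $(w_1\phi)(x)=\phi(x)+O(\Delta x^2)$ for smooth $\phi$.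
   Context: Fix $d\ge1$, $q\ge1$, velocities $c_1,\dots,c_q\in\mathbb{Z}^d$, invertible $M$, $S=\mathrm{diag}(s_1,\dots,s_q)$ with $s_i\in(0,2]$ for $i\ge2$, $\epsilon\in\mathbb{R}^q$, $\epsilon_1=1$, all independent of $\Delta x$; $K=I-S(I-\epsilon e_1^T)$; acoustic scaling $\Delta t=\Delta x/\lambda$ with $\lambda>0$ fixed. Shifts $(x_\ell\phi)(x)=\phi(x-\Delta xe_\ell)$, $x^{\mathfrak{e}}=\prod x_\ell^{\mathfrak{e}_\ell}$, $\mathfrak{e}^{\mathfrak{n}}=\prod\mathfrak{e}_\ell^{\mathfrak{n}_\ell}$. $T=M\mathrm{diag}(x^{c_1},\dots,x^{c_q})M^{-1}$, $E=TK$, $(z\phi)(t)=\phi(t+\Delta t)$. $\mathcal{G}=M\mathrm{diag}(c_1\cdot\nabla,\dots,c_q\cdot\nabla)M^{-1}$. The target Cauchy problem is $\partial_tu+V\cdot\nabla u=0$, $u(0,\cdot)=u^\circ$, with point-wise lattice discretisation $m_1^\circ$ of $u^\circ$. Initialisation $m(0,x)=w\,m_1^\circ(x)$. The $n$-th starting scheme is $m_1(n\Delta t,x)=(E^nw)_1m_1^\circ(x)$; its modified equation is obtained by substituting a smooth $\phi$ into $(z^n\phi)(0,x)=((E^nw)_1\phi(0,\cdot))(x)$, Taylor-expanding in $\Delta x$, and dividing the first-order terms by $n\Delta x/\lambda$. The bulk finite difference scheme is $z^{Q+1-q}\det(zI-E)m_1=0$ ($Q$ the number of $i\ge2$ with $s_i\ne1$),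 whose modified equation at leading order is $\partial_t\phi+\lambda(\mathcal{G}_{11}+\sum_{r\ge2}\mathcal{G}_{1r}\epsilon_r)\phi=O(\Delta x)$. *)

From HB Require Import structures.
From mathcomp Require Import all_boot all_order all_algebra.
From mathcomp Require Import all_classical all_reals all_analysis.
Set Implicit Arguments. Unset Strict Implicit. Unset Printing Implicit Defensive.
Import Order.TTheory GRing.Theory Num.Theory.
Import numFieldNormedType.Exports.
Local Open Scope ring_scope.

Fixpoint iterD {R : realType} {V : normedModType R} (vs : seq V) (f : V -> R)
  : V -> R :=
  if vs is v :: vs' then (fun a => 'D_v (iterD vs' f) a) else f.

Definition smooth {R : realType} {V : normedModType R} (f : V -> R) : Prop :=
  forall vs : seq V,
    continuous (iterD vs f) /\ (forall a v, derivable (iterD vs f) a v).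

Definition intvec {R : realType} {d : nat} (e : 'rV[int]_d) : 'rV[R]_d :=
  map_mx (fun z : int => z%:~R) e.

(* monomial of shifts x^e acting on a space function, step dx:
   (x^e f)(y) = f(y - dx e) *)
Definition shift {R : realType} {d : nat} (dx : R) (e : 'rV[int]_d)
  (f : 'rV[R]_d -> R) : 'rV[R]_d -> R :=
  fun y => f (y - dx *: intvec e).

Definition wop {R : realType} {d q : nat} (dx : R) (S : seq 'rV[int]_d)
  (Wc : 'I_q -> 'rV[int]_d -> R) (i : 'I_q) (f : 'rV[R]_d -> R)
  : 'rV[R]_d -> R :=
  fun y => \sum_(e <- S) Wc i e * shift dx e f y.

(* K = I - S (I - eps e_1^T), index 1 of the paper is ord0 *)
Definition Kmx {R : realType} {q : nat} (s eps : 'I_q.+1 -> R) : 'M[R]_q.+1 :=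
  1%:M - diag_mx (\row_i s i) *m
         (1%:M - (\col_i eps i) *m (\row_j (if j == ord0 then 1 else 0))).

(* E = T K with T = M diag(x^{c_1},...,x^{c_q}) M^{-1}, acting on a vector
   of space functions *)
Definition Eop {R : realType} {d q : nat} (dx : R) (c : 'I_q.+1 -> 'rV[int]_d)
  (M : 'M[R]_q.+1) (s eps : 'I_q.+1 -> R)
  (v : 'I_q.+1 -> ('rV[R]_d -> R)) : 'I_q.+1 -> ('rV[R]_d -> R) :=
  fun i y => \sum_j M i j *
     shift dx (c j)
       (fun z => \sum_k invmx M j k * \sum_l Kmx s eps k l * v l z) y.

Definition starting_scheme {R : realType} {d q : nat} (dx : R)
  (c : 'I_q.+1 -> 'rV[int]_d) (M : 'M[R]_q.+1) (s eps : 'I_q.+1 -> R)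
  (S : seq 'rV[int]_d) (Wc : 'I_q.+1 -> 'rV[int]_d -> R) (n : nat)
  (f : 'rV[R]_d -> R) : 'rV[R]_d -> R :=
  iter n (Eop dx c M s eps) (fun i => wop dx S Wc i f) ord0.

(* first-order constant-coefficient differential operators g . grad are
   represented by their coefficient vector g *)
Definition dop {R : realType} {d : nat} (g : 'rV[R]_d) (f : 'rV[R]_d -> R)
  (y : 'rV[R]_d) : R :=
  \sum_(l < d) g ord0 l * 'D_(delta_mx ord0 l) f y.

(* G = M diag(c_1.grad, ..., c_q.grad) M^{-1}, entry (i,r) as coefficient
   vector *)
Definition Gmx {R : realType} {d q : nat} (c : 'I_q.+1 -> 'rV[int]_d)
  (M : 'M[R]_q.+1) (i r : 'I_q.+1) : 'rV[R]_d :=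
  \sum_j (M i j * invmx M j r) *: intvec (c j).

From Pilot Require Import Defs.
From HB Require Import structures.
From mathcomp Require Import all_boot all_order all_algebra.
From mathcomp Require Import all_classical all_reals all_analysis.
From mathcomp Require Import lra ring.
Set Implicit Arguments. Unset Strict Implicit. Unset Printing Implicit Defensive.
Import Order.TTheory GRing.Theory Num.Theory.
Import numFieldNormedType.Exports.
Local Open Scope ring_scope.

(* Every operator of the scheme is a finite combination of shifts
   f |-> f (. - dx c), and f (y - h v) = f y - h (v . grad) f y + O(h^2)
   uniformly near any point.  Hence w_i and (E^n w)_i, applied to a smooth f,
   are A f + dx (B . grad) f + O(dx^2), where the coefficients propagate by
   A |-> K A and B |-> K B - sum_k (K A)_k G_{.k}.  The prepared
   initialisation gives A_1 = 1 and A_r = eps_r whenever G_{1r} <> 0, which K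
   preserves because K eps = eps; with B_1 = 0 initially (vanishing first
   moment of w_1), after n steps the first component has A = 1 and
   B = -n sum_r eps_r G_{1r}.  Comparing with the Taylor expansion of phi in
   time gives the modified equation, and n = 0 is the consistency of the
   initial datum. *)

Section UniformBigO.
Context {R : realType} {V : normedModType R}.
Implicit Types (k : nat) (x : V) (E : R -> V -> R).

Definition unif_O k x E := exists C delta : R, 0 < delta /\
  forall h y, `|h| < delta -> `|y - x| < delta -> `|E h y| <= C * `|h| ^+ k.

Lemma unif_O_ext k x E' E :
  unif_O k x E' -> (forall h y, E h y = E' h y) -> unif_O k x E.
Proof.
move=> [C [dl [dl0 H]]] eE; exists C, dl; split => // h y hd yd.
by rewrite eE; apply: H.
Qed.

Lemma unif_OD k x E1 E2 :
  unif_O k x E1 -> unif_O k x E2 -> unif_O k x (fun h y => E1 h y + E2 h y).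
Proof.
move=> [C1 [d1 [d10 H1]]] [C2 [d2 [d20 H2]]].
exists (C1 + C2), (Num.min d1 d2); split; first by rewrite lt_min d10 d20.
move=> h y; rewrite !lt_min => /andP[hd1 hd2] /andP[yd1 yd2].
have := H1 h y hd1 yd1; have := H2 h y hd2 yd2.
have := ler_normD (E1 h y) (E2 h y).
rewrite mulrDl; lra.
Qed.

Lemma unif_OMl k x a E : unif_O k x E -> unif_O k x (fun h y => a * E h y).
Proof.
move=> [C [dl [dl0 H]]]; exists (`|a| * C), dl; split => // h y hd yd.
by rewrite normrM -mulrA ler_wpM2l // H.
Qed.

Lemma unif_O_sum (I : Type) (r : seq I) k x (E : I -> R -> V -> R) :
  (forall i, unif_O k x (E i)) -> unif_O k x (fun h y => \sum_(i <- r) E i h y).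
Proof.
move=> HE; elim: r => [|i r IHr].
  exists 0, 1; split => // h y _ _.
  by rewrite big_nil normr0 mul0r.
apply: (unif_O_ext (unif_OD (HE i) IHr)) => h y.
by rewrite big_cons.
Qed.

Lemma unif_O_mulh k x E : unif_O k x E -> unif_O k.+1 x (fun h y => h * E h y).
Proof.
move=> [C [dl [dl0 H]]]; exists C, dl; split => // h y hd yd.
by rewrite normrM exprS mulrCA ler_wpM2l // H.
Qed.

Lemma unif_OW k x E : unif_O k.+1 x E -> unif_O k x E.
Proof.
move=> [C [dl [dl0 H]]]; exists `|C|, (Num.min dl 1); split.
  by rewrite lt_min dl0 ltr01.
move=> h y; rewrite !lt_min => /andP[hd h1] /andP[yd _].
apply: (le_trans (H h y hd yd)); rewrite exprS mulrA.
apply: ler_wpM2r => //; apply: (le_trans (ler_norm _)).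
rewrite normrM normr_id; have := normr_ge0 C; have := normr_ge0 h; nra.
Qed.

Lemma unif_O_cont x (g : V -> R) :
  {for x, continuous g} -> unif_O 0 x (fun _ y => g y).
Proof.
move=> /cvgr_dist_lt /(_ 1 ltr01) /nbhs_normP [e e0 He].
exists (`|g x| + 1), e; split => // h y _ yx.
have gy : `|g x - g y| < 1 by apply: (He y); rewrite /= distrC.
rewrite expr0 mulr1 -[g y](subrKC (g x)).
by apply: (le_trans (ler_normD _ _)); rewrite lerD2l distrC ltW.
Qed.

Lemma unif_O_reparam k x (b : R) (v : V) E : unif_O k x E ->
  unif_O k x (fun h y => E (b * h) (y + h *: v)).
Proof.
move=> [C [dl [dl0 H]]].
have nb := normr_ge0 b; have nv := normr_ge0 v.
set K := 2 * ((`|b| + 1) * (`|v| + 1)).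
have K0 : 0 < K by rewrite /K; nra.
exists (C * `|b| ^+ k), (dl / K); split; first by rewrite divr_gt0.
move=> h y; rewrite !ltr_pdivlMr // => hd yd.
have nh := normr_ge0 h; have nyx := normr_ge0 (y - x).
have Kb : `|b| <= K by rewrite /K; nra.
have Kv : 2 * `|v| <= K by rewrite /K; nra.
have K2 : 2 <= K by rewrite /K; nra.
rewrite -mulrA -exprMn -normrM; apply: H.
  rewrite normrM mulrC; apply: le_lt_trans hd; exact: ler_wpM2l.
rewrite addrAC; apply: (le_lt_trans (ler_normD _ _)); rewrite normrZ.
have : `|h| * (2 * `|v|) <= `|h| * K by exact: ler_wpM2l.
have : `|y - x| * 2 <= `|y - x| * K by exact: ler_wpM2l.
lra.
Qed.

End UniformBigO.

Lemma derive_dir_eq {R : realType} {V W : normedModType R}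
    (F : V -> R) (G : W -> R) a v b w :
  (forall h : R, F (h *: v + a) = G (h *: w + b)) ->
  'D_v F a = 'D_w G b /\ (derivable F a v <-> derivable G b w).
Proof.
move=> FG.
have FGa : F a = G b by have := FG 0; rewrite !scale0r !add0r.
have quot : (fun h : R => h^-1 *: ((F \o shift a) (h *: v) - F a)) =
            (fun h : R => h^-1 *: ((G \o shift b) (h *: w) - G b)).
  by apply/funext => h /=; rewrite /shift FG FGa.
by rewrite /derive /derivable quot.
Qed.

Lemma MVT_unordered {R : realType} (g : R -> R) a b :
  (forall t, derivable g t 1) ->
  exists2 c, `|c - a| <= `|b - a| & g b - g a = 'D_1 g c * (b - a).
Proof.
move=> dg.
have cg : continuous g.
  by move=> t; apply: differentiable_continuous; apply/derivable1_diffP.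
have Dg x : is_derive x (1 : R) g ('D_1 g x) by apply: derivableP.
have [ab|ba] := lerP a b.
  have [c] := MVT_segment ab (fun x _ => Dg x) (continuous_subspaceT cg).
  rewrite in_itv /= => /andP[ac cb] gab; exists c => //.
  by rewrite !ger0_norm ?subr_ge0 // lerD2r.
have [c] := MVT_segment (ltW ba) (fun x _ => Dg x) (continuous_subspaceT cg).
rewrite in_itv /= => /andP[bc ca] gba; exists c.
  rewrite !ler0_norm ?subr_le0 ?(ltW ba) //; lra.
by rewrite -opprB gba -mulrN opprB.
Qed.

Section DirectionalTaylor.
Context {R : realType} {V : normedModType R}.

Lemma derive1_line (f : V -> R) (w y : V) (t : R) :
  'D_1 (fun u : R => f (u *: w + y)) t = 'D_w f (t *: w + y) /\
  (derivable (fun u : R => f (u *: w + y)) t 1 <-> derivable f (t *: w + y) w).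
Proof. by apply: derive_dir_eq => h; rewrite [h *: 1]mulr1 scalerDl addrA. Qed.

Lemma taylor2_dir (f : V -> R) (x w : V) :
  (forall a, derivable f a w) -> (forall a, derivable ('D_w f) a w) ->
  {for x, continuous ('D_w ('D_w f))} ->
  unif_O 2 x (fun h y => f (h *: w + y) - f y - h * 'D_w f y).
Proof.
move=> df ddf /unif_O_cont [C [e [e0 Hf2]]].
have w1 : 0 < `|w| + 1 by rewrite ltr_wpDl.
exists C, (e / (2 * (`|w| + 1))); split; first by rewrite !divr_gt0.
move=> h y; rewrite !ltr_pdivlMr ?mulr_gt0 // => hd yd.
have [xi xih Exi] :=
  MVT_unordered 0 h (fun t => (derive1_line f w y t).2.2 (df _)).
have [eta etaxi Eeta] :=
  MVT_unordered 0 xi (fun t => (derive1_line ('D_w f) w y t).2.2 (ddf _)).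
rewrite !subr0 in xih etaxi.
rewrite !subr0 !scale0r !add0r (derive1_line f w y xi).1 in Exi.
rewrite !subr0 !scale0r !add0r (derive1_line ('D_w f) w y eta).1 in Eeta.
have -> : f (h *: w + y) - f y - h * 'D_w f y
          = h * xi * 'D_w ('D_w f) (eta *: w + y).
  rewrite Exi; have -> : 'D_w f (xi *: w + y)
      = 'D_w f y + 'D_w ('D_w f) (eta *: w + y) * xi by rewrite -Eeta subrKC.
  ring.
have near : `|eta *: w + y - x| < e.
  rewrite -addrA; apply: (le_lt_trans (ler_normD _ _)); rewrite normrZ.
  have nw := normr_ge0 w; have nyx := normr_ge0 (y - x).
  have : `|eta| * `|w| <= `|h| * (`|w| + 1).
    by apply: ler_pM => //; [exact: le_trans etaxi xih | lra].
  have : `|y - x| <= `|y - x| * (`|w| + 1) by apply: ler_peMr => //; lra.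
  lra.
have := Hf2 0 (eta *: w + y) (ltac:(by rewrite normr0)) near.
rewrite expr0 mulr1 => bound.
have hxi : `|h| * `|xi| <= `|h| ^+ 2 by rewrite expr2 ler_wpM2l.
rewrite !normrM mulrC; apply: le_trans (ler_wpM2l _ hxi) _ => //.
by rewrite ler_wpM2r ?exprn_ge0.
Qed.

Lemma iterD_cat (f : V -> R) vs us :
  Defs.iterD vs (Defs.iterD us f) = Defs.iterD (vs ++ us) f.
Proof. by elim: vs => //= v vs ->. Qed.

Lemma smooth_iterD (f : V -> R) us : smooth f -> smooth (Defs.iterD us f).
Proof. by move=> sf vs; rewrite iterD_cat; apply: sf. Qed.

Lemma smooth_taylor2_dir (f : V -> R) (x w : V) : smooth f ->
  unif_O 2 x (fun h y => f (h *: w + y) - f y - h * 'D_w f y).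
Proof.
move=> sf; exact: taylor2_dir (fun a => (sf [::]).2 a w)
  (fun a => (sf [:: w]).2 a w) ((sf [:: w; w]).1 x).
Qed.

Lemma smooth_lipschitz_dir (f : V -> R) (x w : V) : smooth f ->
  unif_O 1 x (fun h y => f (h *: w + y) - f y).
Proof.
move=> sf.
apply: (unif_O_ext (unif_OD (unif_OW (smooth_taylor2_dir x w sf))
                            (unif_O_mulh (unif_O_cont ((sf [:: w]).1 x))))).
by move=> h y /=; rewrite subrK.
Qed.

Lemma smooth_taylor2_lincomb (f : V -> R) (I : Type) (r : seq I)
    (a : I -> R) (u : I -> V) (x : V) : smooth f ->
  unif_O 2 x (fun h y => f (h *: \sum_(i <- r) a i *: u i + y) - f y
                         - h * \sum_(i <- r) a i * 'D_(u i) f y).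
Proof.
move=> sf; elim: r => [|i r IHr].
  exists 0, 1; split => // h y _ _.
  by rewrite !big_nil scaler0 add0r mulr0 !subrr normr0 mul0r.
set s := \sum_(j <- r) a j *: u j.
have Du := smooth_lipschitz_dir x s (smooth_iterD [:: u i] sf).
apply: (unif_O_ext (unif_OD (unif_OD
  (unif_O_reparam (a i) s (smooth_taylor2_dir x (u i) sf))
  (unif_O_mulh (unif_OMl (a i) Du))) IHr)).
move=> h y /=; rewrite !big_cons -/s.
have -> : h *: (a i *: u i + s) + y = (a i * h) *: u i + (h *: s + y).
  by rewrite scalerDr scalerA addrA (mulrC h).
rewrite (addrC y); ring.
Qed.

End DirectionalTaylor.

Section FirstOrderExpansion.
Context {R : realType} {d : nat}.
Local Notation V := 'rV[R]_d.
Implicit Types (f : V -> R) (B : V).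

Lemma dopD B1 B2 f y : dop (B1 + B2) f y = dop B1 f y + dop B2 f y.
Proof. by rewrite /dop -big_split; apply: eq_bigr => l _; rewrite mxE mulrDl. Qed.

Lemma dopB B1 B2 f y : dop (B1 - B2) f y = dop B1 f y - dop B2 f y.
Proof. by rewrite /dop -sumrB; apply: eq_bigr => l _; rewrite !mxE mulrBl. Qed.

Lemma dopZ a B f y : dop (a *: B) f y = a * dop B f y.
Proof. by rewrite /dop mulr_sumr; apply: eq_bigr => l _; rewrite mxE mulrA. Qed.

Lemma dop0 f y : dop 0 f y = 0.
Proof. by rewrite -(scale0r 0) dopZ mul0r. Qed.

Lemma dop_sum (I : Type) (r : seq I) (B : I -> V) f y :
  dop (\sum_(i <- r) B i) f y = \sum_(i <- r) dop (B i) f y.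
Proof.
elim: r => [|i r IHr]; first by rewrite !big_nil dop0.
by rewrite !big_cons dopD IHr.
Qed.

Lemma smooth_taylor2_dop f (v : V) x : smooth f ->
  unif_O 2 x (fun h y => f (y - h *: v) - f y + h * dop v f y).
Proof.
move=> sf.
have Ev : \sum_(l <- index_enum 'I_d) - v ord0 l *: (delta_mx ord0 l : V) = - v.
  rewrite [in RHS](row_sum_delta v) -sumrN.
  by apply: eq_bigr => l _; rewrite scaleNr.
have ED y : \sum_(l <- index_enum 'I_d) - v ord0 l * 'D_(delta_mx ord0 l) f y
            = - dop v f y.
  by rewrite /dop -sumrN; apply: eq_bigr => l _; rewrite mulNr.
apply: (unif_O_ext (smooth_taylor2_lincomb (index_enum 'I_d)
  (fun l => - v ord0 l) (fun l => delta_mx ord0 l) x sf)) => h y.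
by rewrite Ev ED scalerN (addrC (- _)) mulrN opprK.
Qed.

Lemma smooth_lipschitz_dop f B (v : V) x : smooth f ->
  unif_O 1 x (fun h y => dop B f (y - h *: v) - dop B f y).
Proof.
move=> sf; apply: (unif_O_ext (unif_O_sum (index_enum 'I_d) (fun l =>
  unif_OMl (B ord0 l)
    (smooth_lipschitz_dir x (- v) (smooth_iterD [:: delta_mx ord0 l] sf))))).
move=> h y /=; rewrite /dop -sumrB; apply: eq_bigr => l _.
by rewrite scalerN (addrC (- _)) mulrBr.
Qed.

Definition expansion1 f (g : R -> V -> R) (A : R) B :=
  forall x, unif_O 2 x (fun h y => g h y - (A * f y + h * dop B f y)).

Lemma expansion1_ext f g' g A B :
  expansion1 f g' A B -> (forall h y, g h y = g' h y) -> expansion1 f g A B.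
Proof. by move=> Hg' gg' x; apply: (unif_O_ext (Hg' x)) => h y; rewrite gg'. Qed.

Lemma expansion1_id f : expansion1 f (fun _ => f) 1 0.
Proof.
move=> x; exists 0, 1; split => // h y _ _.
by rewrite dop0 mulr0 addr0 mul1r subrr normr0 mul0r.
Qed.

Lemma expansion1D f g1 g2 A1 A2 B1 B2 :
  expansion1 f g1 A1 B1 -> expansion1 f g2 A2 B2 ->
  expansion1 f (fun h y => g1 h y + g2 h y) (A1 + A2) (B1 + B2).
Proof.
move=> H1 H2 x; apply: (unif_O_ext (unif_OD (H1 x) (H2 x))) => h y.
by rewrite dopD; ring.
Qed.

Lemma expansion1Ml f g A B a : expansion1 f g A B ->
  expansion1 f (fun h y => a * g h y) (a * A) (a *: B).
Proof.
move=> H x; apply: (unif_O_ext (unif_OMl a (H x))) => h y.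
by rewrite dopZ; ring.
Qed.

Lemma expansion1_sum (I : Type) (r : seq I) f (g : I -> R -> V -> R)
    (A : I -> R) (B : I -> V) :
  (forall i, expansion1 f (g i) (A i) (B i)) ->
  expansion1 f (fun h y => \sum_(i <- r) g i h y)
    (\sum_(i <- r) A i) (\sum_(i <- r) B i).
Proof.
move=> H; elim: r => [|i r IHr].
  have := expansion1Ml 0 (expansion1_id f); rewrite mul0r scaler0 !big_nil.
  by move/expansion1_ext; apply=> h y; rewrite big_nil mul0r.
rewrite !big_cons; apply: (expansion1_ext (expansion1D (H i) IHr)) => h y.
by rewrite big_cons.
Qed.

Lemma expansion1_shift f g A B (v : V) : smooth f -> expansion1 f g A B ->
  expansion1 f (fun h y => g h (y - h *: v)) A (B - A *: v).
Proof.
move=> sf H x.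
apply: (unif_O_ext (unif_OD (unif_OD
  (unif_O_reparam 1 (- v) (H x))
  (unif_OMl A (smooth_taylor2_dop v x sf)))
  (unif_O_mulh (smooth_lipschitz_dop B v x sf)))).
move=> h y /=; rewrite mul1r scalerN dopB dopZ; ring.
Qed.

End FirstOrderExpansion.

Section CollisionAlgebra.
Variables (R : realType) (q : nat) (s eps : 'I_q.+1 -> R).

Lemma sum_delta_scale (W : lmodType R) n (Y : 'I_n -> W) k :
  \sum_l (k == l)%:R *: Y l = Y k.
Proof.
rewrite (bigD1 k) //= eqxx scale1r big1 ?addr0 // => l lk.
by rewrite eq_sym (negbTE lk) scale0r.
Qed.

Lemma sum_mulmx_invmx (M : 'M[R]_q.+1) (W : lmodType R) (Y : 'I_q.+1 -> W) i :
  M \in unitmx -> \sum_j M i j *: \sum_k invmx M j k *: Y k = Y i.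
Proof.
move=> hM; under eq_bigr do rewrite scaler_sumr.
rewrite exchange_big /= -[RHS](sum_delta_scale Y i); apply: eq_bigr => k _.
have := congr1 (fun A : 'M[R]_q.+1 => A i k) (mulmxV hM); rewrite !mxE => <-.
by rewrite scaler_suml; apply: eq_bigr => j _; rewrite scalerA.
Qed.

Lemma KmxE k l : Kmx s eps k l =
  (k == l)%:R - s k * ((k == l)%:R - eps k * (l == ord0)%:R).
Proof. by rewrite /Kmx mxE mul_diag_mx !mxE big_ord1 !mxE; case: (l == ord0). Qed.

(* On [R] itself [*:] is [*] up to conversion, so [Kact] also acts on the
   scalar coefficients of the expansions. *)
Definition Kact (W : lmodType R) (X : 'I_q.+1 -> W) k :=
  \sum_l Kmx s eps k l *: X l.

Lemma KactE (W : lmodType R) (X : 'I_q.+1 -> W) k :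
  Kact X k = X k - s k *: (X k - eps k *: X ord0).
Proof.
rewrite /Kact; under eq_bigr do rewrite KmxE.
rewrite -[X k](sum_delta_scale X k) -[X ord0](sum_delta_scale X ord0).
rewrite scaler_sumr -sumrB scaler_sumr -sumrB; apply: eq_bigr => l _.
by rewrite (eq_sym ord0) !scalerBl !scalerBr !scalerA mulrBr mulrA scalerBl.
Qed.

End CollisionAlgebra.

Section StartingScheme.
Variables (R : realType) (d q : nat) (c : 'I_q.+1 -> 'rV[int]_d).
Variables (M : 'M[R]_q.+1) (s eps : 'I_q.+1 -> R).
Variables (S : seq 'rV[int]_d) (Wc : 'I_q.+1 -> 'rV[int]_d -> R).
Hypothesis hM : M \in unitmx.
Local Notation V := 'rV[R]_d.
Local Notation K := (Kact s eps).

Lemma expansion1_wop (f : V -> R) i : smooth f ->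
  expansion1 f (fun h => wop h S Wc i f)
    (\sum_(e <- S) Wc i e) (- \sum_(e <- S) Wc i e *: intvec e).
Proof.
move=> sf.
have E := expansion1_sum S (fun e =>
  expansion1Ml (Wc i e) (expansion1_shift (intvec e) sf (expansion1_id f))).
have eA : \sum_(e <- S) Wc i e * 1 = \sum_(e <- S) Wc i e.
  by apply: eq_bigr => e _; rewrite mulr1.
have eB : \sum_(e <- S) Wc i e *: (0 - 1 *: intvec e)
          = - \sum_(e <- S) Wc i e *: intvec e :> V.
  by rewrite -sumrN; apply: eq_bigr => e _; rewrite add0r scale1r scalerN.
by rewrite eA eB in E.
Qed.

Lemma expansion1_Eop (f : V -> R) (v : R -> 'I_q.+1 -> V -> R) A B :
  smooth f -> (forall l, expansion1 f (fun h => v h l) (A l) (B l)) ->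
  forall i, expansion1 f (fun h => Eop h c M s eps (v h) i)
    (K A i) (K B i - \sum_k K A k *: Gmx c M i k).
Proof.
move=> sf Hv i.
pose inner j h z := \sum_k invmx M j k * \sum_l Kmx s eps k l * v h l z.
have Hinner j : expansion1 f (inner j)
    (\sum_k invmx M j k * K A k) (\sum_k invmx M j k *: K B k).
  apply: expansion1_sum => k; apply: expansion1Ml.
  by apply: expansion1_sum => l; apply: expansion1Ml.
have E := expansion1_sum (index_enum 'I_q.+1) (fun j =>
  expansion1Ml (M i j) (expansion1_shift (intvec (c j)) sf (Hinner j))).
have eA : \sum_j M i j * (\sum_k invmx M j k * K A k) = K A i.
  exact: sum_mulmx_invmx.
have eB : \sum_j M i j *: (\sum_k invmx M j k *: K B k
            - (\sum_k invmx M j k * K A k) *: intvec (c j))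
          = K B i - \sum_k K A k *: Gmx c M i k.
  under eq_bigr do rewrite scalerBr.
  rewrite sumrB sum_mulmx_invmx //; congr (_ - _).
  rewrite /Gmx; under [RHS]eq_bigr do rewrite scaler_sumr.
  rewrite exchange_big /=; apply: eq_bigr => j _.
  rewrite scalerA mulr_sumr scaler_suml; apply: eq_bigr => k _.
  by rewrite scalerA; congr (_ *: _); ring.
by rewrite eA eB in E.
Qed.

Fixpoint zeroth_coef n : 'I_q.+1 -> R :=
  if n is n'.+1 then K (zeroth_coef n') else fun i => \sum_(e <- S) Wc i e.

Fixpoint first_coef n : 'I_q.+1 -> V :=
  if n is n'.+1 then
    fun i => K (first_coef n') i - \sum_k K (zeroth_coef n') k *: Gmx c M i k
  else fun i => - \sum_(e <- S) Wc i e *: intvec e.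

Lemma expansion1_iter_Eop (f : V -> R) n i : smooth f ->
  expansion1 f (fun h => iter n (Eop h c M s eps) (fun j => wop h S Wc j f) i)
    (zeroth_coef n i) (first_coef n i).
Proof.
move=> sf; elim: n i => [|n IHn] i; first exact: expansion1_wop.
exact: expansion1_Eop.
Qed.

Hypothesis heps : eps ord0 = 1.

Lemma Kact_ord0 (W : lmodType R) (X : 'I_q.+1 -> W) : K X ord0 = X ord0.
Proof. by rewrite KactE heps scale1r subrr scaler0 subr0. Qed.

Definition prepared (A : 'I_q.+1 -> R) :=
  A ord0 = 1 /\ forall r, r != ord0 -> Gmx c M ord0 r != 0 -> A r = eps r.

Lemma prepared_Kact A : prepared A -> prepared (K A).
Proof.
move=> [A0 Ar]; split; first by rewrite Kact_ord0.
by move=> r r0 Gr; rewrite KactE A0 Ar // scaler1 subrr scaler0 subr0.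
Qed.

Lemma prepared_sum_Gmx A : prepared A ->
  \sum_k A k *: Gmx c M ord0 k = \sum_k eps k *: Gmx c M ord0 k.
Proof.
move=> [A0 Ar]; apply: eq_bigr => k _.
have [->|k0] := eqVneq k ord0; first by rewrite A0 heps.
have [->|Gk] := eqVneq (Gmx c M ord0 k) 0; first by rewrite !scaler0.
by rewrite Ar.
Qed.

Lemma prepared_zeroth_coef n :
  prepared (zeroth_coef 0) -> prepared (zeroth_coef n).
Proof. by move=> A0; elim: n => // n; apply: prepared_Kact. Qed.

Lemma first_coef_ord0 n : prepared (zeroth_coef 0) -> first_coef 0 ord0 = 0 ->
  first_coef n ord0 = - n%:R *: \sum_k eps k *: Gmx c M ord0 k.
Proof.
move=> A0 B0; elim: n => [|n IHn]; first by rewrite B0 oppr0 scale0r.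
rewrite /= Kact_ord0 IHn prepared_sum_Gmx.
  by rewrite mulrSr opprD scalerDl scaleN1r.
exact/prepared_Kact/prepared_zeroth_coef.
Qed.

Lemma starting_scheme_expansion (f : V -> R) n :
  prepared (zeroth_coef 0) -> first_coef 0 ord0 = 0 -> smooth f ->
  expansion1 f (fun h => starting_scheme h c M s eps S Wc n f)
    1 (- n%:R *: \sum_k eps k *: Gmx c M ord0 k).
Proof.
move=> A0 B0 sf; rewrite -first_coef_ord0 //.
rewrite -(prepared_zeroth_coef n A0).1; exact: expansion1_iter_Eop.
Qed.

Lemma dop_sum_Gmx (f : V -> R) y :
  dop (\sum_k eps k *: Gmx c M ord0 k) f y = dop (Gmx c M ord0 ord0) f y
    + \sum_(r < q.+1 | r != ord0) eps r * dop (Gmx c M ord0 r) f y.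
Proof.
rewrite dop_sum (bigD1 ord0) //= dopZ heps mul1r.
by congr (_ + _); apply: eq_bigr => r _; rewrite dopZ.
Qed.

End StartingScheme.

Lemma sum_intvec_eq0 (R : realType) (d : nat) (S : seq 'rV[int]_d)
    (w : 'rV[int]_d -> R) :
  (forall l : 'I_d, \sum_(e <- S) w e * (e ord0 l)%:~R = 0) ->
  \sum_(e <- S) w e *: intvec e = 0 :> 'rV[R]_d.
Proof.
move=> w1; apply/rowP => l; rewrite summxE mxE -[RHS](w1 l).
by apply: eq_bigr => e _; rewrite !mxE.
Qed.

Section TimeSlices.
Context {R : realType} {V : normedModType R}.

Lemma scale_pairD (h t t' : R) (v v' : V) :
  h *: (t, v) + (t', v') = (h * t + t', h *: v + v').
Proof. by []. Qed.

Lemma iterD_slice (phi : R * V -> R) t vs :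
  Defs.iterD vs (fun y : V => phi (t, y)) =
  fun y => Defs.iterD (map (fun v => (0 : R, v)) vs) phi (t, y).
Proof.
elim: vs => //= v vs ->; apply/funext => a.
by apply: (derive_dir_eq _).1 => h; rewrite scale_pairD mulr0 add0r.
Qed.

Lemma continuous_pair_const (W U : normedModType R) (a : W) :
  continuous (fun y : U => (a, y)).
Proof. by move=> z; apply: cvg_pair => /=; [exact: cvg_cst | exact: cvg_id]. Qed.

Lemma smooth_slice (phi : R * V -> R) t :
  smooth phi -> smooth (fun y : V => phi (t, y)).
Proof.
move=> sphi vs; rewrite iterD_slice; set G := Defs.iterD _ phi.
split => [y|a v].
  by apply: continuous_comp; [exact: continuous_pair_const | exact: (sphi _).1].
have line h : G (t, h *: v + a) = G (h *: (0 : R, v) + (t, a)).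
  by rewrite scale_pairD mulr0 add0r.
by apply/(derive_dir_eq line).2; apply: (sphi _).2.
Qed.

Lemma derive_time (phi : R * V -> R) t x :
  'D_1 (fun u : R => phi (u, x)) t = 'D_(1 : R, 0 : V) phi (t, x).
Proof.
apply: (derive_dir_eq _).1 => h.
by rewrite scale_pairD [h *: 1]mulr1 mulr1 scaler0 add0r.
Qed.

End TimeSlices.

Lemma difference_quotient_bound (R : realType) (a b F Dt D C1 C2 dx lam n : R) :
  0 < dx -> 0 < lam -> 0 < n ->
  `|b - (F - n * dx * D)| <= C1 * dx ^+ 2 ->
  `|a - F - n * (dx / lam) * Dt| <= C2 * (n * (dx / lam)) ^+ 2 ->
  `|(a - b) / (n * dx / lam) - (Dt + lam * D)| <=
    (C2 * n / lam + C1 * lam / n) * dx.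
Proof.
move=> dx0 lam0 n0 Hb Ha.
have h0 : 0 < n * dx / lam by rewrite divr_gt0 // mulr_gt0.
have lam0' := gt_eqF lam0; have n0' := gt_eqF n0; have dx0' := gt_eqF dx0.
have -> : (a - b) / (n * dx / lam) - (Dt + lam * D) =
    ((a - F - n * (dx / lam) * Dt) - (b - (F - n * dx * D))) / (n * dx / lam).
  by field; rewrite lam0' dx0' n0'.
rewrite normrM normfV (gtr0_norm h0) ler_pdivrMr //.
apply: (le_trans (ler_normB _ _)).
have -> : (C2 * n / lam + C1 * lam / n) * dx * (n * dx / lam) =
    C2 * (n * (dx / lam)) ^+ 2 + C1 * dx ^+ 2 by field; rewrite lam0' n0'.
lra.
Qed.

Section ModifiedEquation.
Variables (R : realType) (d : nat).
Local Notation V := 'rV[R]_d.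

Lemma modified_equation_of_expansion (phi : R * V -> R) (g : R -> V -> R)
    (G : V) (n : nat) (lam : R) (x : V) :
  (0 < n)%N -> 0 < lam -> smooth phi ->
  expansion1 (fun y => phi (0, y)) g 1 (- n%:R *: G) ->
  exists C delta : R, 0 < delta /\ forall dx, 0 < dx < delta ->
    `|(phi (n%:R * (dx / lam), x) - g dx x) / (n%:R * dx / lam)
      - ('D_1 (fun t => phi (t, x)) 0 + lam * dop G (fun y => phi (0, y)) x)|
    <= C * dx.
Proof.
move=> n0 lam0 sphi Eg.
have [C1 [d1 [d10 H1]]] := Eg x.
have [C2 [d2 [d20 H2]]] := smooth_taylor2_dir (0 : R, x) (1 : R, 0 : V) sphi.
have n0' : 0 < n%:R :> R by rewrite ltr0n.
exists (C2 * n%:R / lam + C1 * lam / n%:R), (Num.min d1 (d2 * lam / n%:R)).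
split; first by rewrite lt_min d10 !divr_gt0 // mulr_gt0.
move=> dx /andP[dx0]; rewrite lt_min => /andP[dd1 dd2].
have dist0 (W : normedModType R) (z : W) e : 0 < e -> `|z - z| < e.
  by rewrite subrr normr0.
have dxd1 : `|dx| < d1 by rewrite gtr0_norm.
have := H1 dx x dxd1 (dist0 _ x _ d10).
rewrite dopZ (gtr0_norm dx0) (_ : 1 * _ + _ = phi (0, x) - n%:R * dx * dop G
  (fun y => phi (0, y)) x); last by ring.
move=> Hb; apply: (difference_quotient_bound dx0 lam0 n0' Hb).
have h0 : 0 < n%:R * (dx / lam) by rewrite mulr_gt0 // divr_gt0.
have hd2 : `|n%:R * (dx / lam)| < d2.
  have -> : d2 = n%:R * ((d2 * lam / n%:R) / lam) by field; rewrite !gt_eqF.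
  by rewrite gtr0_norm // ltr_pM2l // ltr_pM2r ?invr_gt0.
have := H2 (n%:R * (dx / lam)) (0, x) hd2 (dist0 _ _ _ d20).
by rewrite scale_pairD mulr1 scaler0 !add0r addr0 -derive_time (gtr0_norm h0).
Qed.

End ModifiedEquation.

Unset Implicit Arguments.

Theorem corollary2 (R : realType) (d q : nat) (hd : (0 < d)%N)
  (c : 'I_q.+1 -> 'rV[int]_d) (M : 'M[R]_q.+1) (hM : M \in unitmx)
  (s eps : 'I_q.+1 -> R)
  (hs : forall i : 'I_q.+1, i != ord0 -> 0 < s i <= 2)
  (heps : eps ord0 = 1)
  (lam : R) (hlam : 0 < lam)
  (S : seq 'rV[int]_d) (hS : uniq S)
  (Wc : 'I_q.+1 -> 'rV[int]_d -> R)
  (hWsupp : forall i e, e \notin S -> Wc i e = 0)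
  (hW0 : \sum_(e <- S) Wc ord0 e = 1)
  (hW1 : forall l : 'I_d, \sum_(e <- S) Wc ord0 e * (e ord0 l)%:~R = 0)
  (hWr : forall r : 'I_q.+1, r != ord0 -> Gmx c M ord0 r != 0 ->
           \sum_(e <- S) Wc r e = eps r) :
  (forall (n : nat), (0 < n)%N ->
   forall (phi : R * 'rV[R]_d -> R), smooth phi ->
   forall x : 'rV[R]_d,
   exists C : R, exists delta : R, 0 < delta /\
     forall dx : R, 0 < dx < delta ->
       `| (phi (n%:R * (dx / lam), x)
            - starting_scheme dx c M s eps S Wc n (fun y => phi (0, y)) x)
            / (n%:R * dx / lam)
          - ('D_1 (fun t => phi (t, x)) 0
             + lam * (dop (Gmx c M ord0 ord0) (fun y => phi (0, y)) x
                      + \sum_(r < q.+1 | r != ord0)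
                          eps r * dop (Gmx c M ord0 r) (fun y => phi (0, y)) x)) |
       <= C * dx)
  /\
  (forall (psi : 'rV[R]_d -> R), smooth psi ->
   forall x : 'rV[R]_d,
   exists C : R, exists delta : R, 0 < delta /\
     forall dx : R, 0 < dx < delta ->
       `| wop dx S Wc ord0 psi x - psi x | <= C * dx ^+ 2).
Proof.
have prep0 : prepared c M eps (zeroth_coef s eps S Wc 0) by split.
have B0 : first_coef c M s eps S Wc 0 ord0 = 0.
  by rewrite /= sum_intvec_eq0 ?oppr0.
split=> [n n0 phi sphi x | psi spsi x].
  rewrite -dop_sum_Gmx //.
  apply: (modified_equation_of_expansion
    (g := fun h => starting_scheme h c M s eps S Wc n _)) => //.
  exact: (starting_scheme_expansion hM heps n prep0 B0 (smooth_slice 0 sphi)).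
have := expansion1_wop S Wc ord0 spsi.
rewrite hW0 sum_intvec_eq0 // oppr0 => /(_ x) [C [delta [delta0 Hw]]].
exists C, delta; split=> // dx /andP[dx0 dxd].
have := Hw dx x; rewrite (gtr0_norm dx0) subrr normr0 dop0 mulr0 addr0 mul1r.
by apply.
Qed.
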